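(* Let $\mathfrak{T}$ be a triangulation of the strip and $t=\Phi(\mathfrak{T})$. For $j\in\mathbb{Z}$ let $\gamma_j$ be the number of triangles of $\mathfrak{T}$ incident with the vertex $j^\circ$, i.e. $\gamma_j=1+\#\{\text{arcs of }\mathfrak{T}\text{ with endpoint } j^\circ\}$. Then for all $j,a\in\mathbb{Z}$, $t_{j-1,a}+t_{j+1,a}=\gamma_j\,t_{ja}$, and moreover $\gamma_j=c_{j-1,j+1}$.
   Context: Vertices of the strip: two disjoint copies of $\mathbb{Z}$, written $\mathbb{Z}^\circ=\{p^\circ: p\in\mathbb{Z}\}$ (upper edge) and $\mathbb{Z}_\circ=\{q_\circ : q\in\mathbb{Z}\}$ (lower edge); $p^\circ$ is the point $(-p,1)$ and $q_\circ$ the point $(q,-1)$ of $\mathbb{R}\times[-1,1]$. A connecting arc is a pair $(p^\circ,q_\circ)$; an internal arc is a pair $(p^\circ,q^\circ)$ or $(p_\circ,q_\circ)$ with $p\le q-2$. Two distinct arcs cross exactly in the following cases: connecting arcs $(p^\circ,q_\circ),(p'^\circ,q'_\circ)$ cross iff $(p-p')(q-q')>0$; internal arcs $(a^\circ,b^\circ),(c^\circ,d^\circ)$ cross iff $a<c<b<d$ or $c<a<d<b$ (same for lower internal arcs); $(a^\circ,b^\circ)$ crosses $(p^\circ,q_\circ)$ iff $a<p<b$; $(a_\circ,b_\circ)$ crosses $(p^\circ,q_\circ)$ iff $a<q<b$; upper and lower internal arcs never cross. A triangulation of the strip is a maximal set $\mathfrak{T}$ of pairwise non-crossing arcs such that for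 every $(i,j)\in\mathbb{Z}^2$ there are $(p^\circ,q_\circ),(p'^\circ,q'_\circ)\in\mathfrak{T}$ with $p<i,\ q>j$ and $p'>i,\ q'<j$. Friese numbers: for a convex polygon with vertices $v_0,\dots,v_n$ in cyclic order and triangulation $\mathcal{X}$, with $a_l$ the number of triangles at $v_l$, set $\mathcal{X}(v_k,v_l)=m_k(l)$ where $m_k(k)=0$, $m_k(k+1)=1$, $m_k(l+1)=a_lm_k(l)-m_k(l-1)$ (indices mod $n+1$). $\Phi(\mathfrak{T})_{ij}$: choose $(p^\circ,q_\circ),(r^\circ,s_\circ)\in\mathfrak{T}$ with $p<i<r$, $s<j<q$, let $P$ be the polygon with vertices in cyclic order $p^\circ,\dots,r^\circ,s_\circ,\dots,q_\circ$, $\mathfrak{T}_P$ the triangulation of $P$ by the arcs of $\mathfrak{T}$ that are diagonals of $P$, and set $\Phi(\mathfrak{T})_{ij}=\mathfrak{T}_P(i^\circ,j_\circ)$. For an $\mathrm{SL}_2$-tiling $t$ and $i<j$, $c_{ij}=t_{ia}t_{j,a+1}-t_{i,a+1}t_{ja}$ for any integer $a$ (independent of $a$). *)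

From Stdlib Require Import ZArith List Lia Bool ClassicalEpsilon.
Import ListNotations.
Open Scope Z_scope.

(* Vertices of the strip: U p = p^o (upper edge), L q = q_o (lower edge). *)
Inductive vtx := U (p : Z) | L (q : Z).

(* Arcs: Conn p q = (p^o, q_o); Up a b = (a^o, b^o); Low a b = (a_o, b_o).
   Internal arcs are only valid when a <= b - 2 (see [valid_arc]). *)
Inductive arc := Conn (p q : Z) | Up (a b : Z) | Low (a b : Z).

Definition arc_eq_dec (x y : arc) : {x = y} + {x <> y}.
Proof. decide equality; apply Z.eq_dec. Defined.

Definition valid_arc (x : arc) : Prop :=
  match x with
  | Conn _ _ => True
  | Up a b | Low a b => a <= b - 2
  end.

Definition has_endpoint (v : vtx) (x : arc) : Prop :=
  match x with
  | Conn p q => v = U p \/ v = L q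
  | Up a b => v = U a \/ v = U b
  | Low a b => v = L a \/ v = L b
  end.

Definition cross (x y : arc) : Prop :=
  match x, y with
  | Conn p q, Conn p' q' => (p - p') * (q - q') > 0
  | Up a b, Up c d | Low a b, Low c d =>
      (a < c /\ c < b /\ b < d) \/ (c < a /\ a < d /\ d < b)
  | Up a b, Conn p _ | Conn p _, Up a b => a < p /\ p < b
  | Low a b, Conn _ q | Conn _ q, Low a b => a < q /\ q < b
  | _, _ => False
  end.

Definition triangulation (T : arc -> bool) : Prop :=
  (forall x, T x = true -> valid_arc x) /\
  (forall x y, T x = true -> T y = true -> x <> y -> ~ cross x y) /\
  (forall x, valid_arc x -> T x = false -> exists y, T y = true /\ cross x y) /\
  (forall i j : Z, exists p q p' q',
      T (Conn p q) = true /\ T (Conn p' q') = true /\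
      p < i /\ q > j /\ p' > i /\ q' < j).

Definition mk_arc (v w : vtx) : option arc :=
  match v, w with
  | U a, L b | L b, U a => Some (Conn a b)
  | U a, U b => if a + 2 <=? b then Some (Up a b)
                else if b + 2 <=? a then Some (Up b a) else None
  | L a, L b => if a + 2 <=? b then Some (Low a b)
                else if b + 2 <=? a then Some (Low b a) else None
  end.

(* Polygon P with vertices, in cyclic order, p^o,...,r^o,s_o,...,q_o,
   indexed by 0 .. N-1. *)
Definition poly_size (p q r s : Z) : nat := Z.to_nat ((r - p + 1) + (q - s + 1)).

Definition poly_vtx (p r s : Z) (k : nat) : vtx :=
  let kz := Z.of_nat k in
  if kz <=? r - p then U (p + kz) else L (s + kz - (r - p + 1)).

(* Is the arc joining v and w a diagonal of P belonging to T?
   (v, w are vertices of P; the edges of P that are arcs are (p^o,q_o)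
   and (r^o,s_o); the other edges join adjacent vertices and are not arcs.) *)
Definition is_diag (T : arc -> bool) (p q r s : Z) (v w : vtx) : bool :=
  match mk_arc v w with
  | Some x => T x && negb (if arc_eq_dec x (Conn p q) then true else false)
                  && negb (if arc_eq_dec x (Conn r s) then true else false)
  | None => false
  end.

(* a_l = number of triangles of T_P at vertex v_l = 1 + number of diagonals
   of T_P at v_l. *)
Definition poly_a (T : arc -> bool) (p q r s : Z) (l : nat) : Z :=
  1 + Z.of_nat (length (filter
        (fun k => negb (Nat.eqb k l) &&
                  is_diag T p q r s (poly_vtx p r s l) (poly_vtx p r s k))
        (seq 0 (poly_size p q r s)))).

(* mpair a k d = (m_k(k+d), m_k(k+d+1)) for the recurrence
   m_k(k)=0, m_k(k+1)=1, m_k(l+1) = a_l m_k(l) - m_k(l-1). *)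
Fixpoint mpair (a : nat -> Z) (k d : nat) : Z * Z :=
  match d with
  | O => (0, 1)
  | S d' => let (x, y) := mpair a k d' in (y, a (k + d' + 1)%nat * y - x)
  end.

(* X(v_k, v_l) for the triangulation given by T of the polygon P
   (indices of a taken mod N). *)
Definition friese (T : arc -> bool) (p q r s : Z) (k l : nat) : Z :=
  let N := poly_size p q r s in
  let a := fun m => poly_a T p q r s (Nat.modulo m N) in
  fst (mpair a k (Nat.modulo (l + N - k) N)).

Definition Phi_choice (T : arc -> bool) (i j : Z) (c : Z * Z * Z * Z) : Prop :=
  let '(p, q, r, s) := c in
  T (Conn p q) = true /\ T (Conn r s) = true /\ p < i < r /\ s < j < q.

(* Phi(T)_{ij} = T_P(i^o, j_o); the choice of arcs is made by Hilbert's epsilon. *)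
Definition Phi (T : arc -> bool) (i j : Z) : Z :=
  let '(p, q, r, s) := epsilon (inhabits (0, 0, 0, 0)) (Phi_choice T i j) in
  friese T p q r s (Z.to_nat (i - p)) (Z.to_nat ((r - p + 1) + (j - s))).

From Stdlib Require Import ZArith List Lia Bool Classical ClassicalEpsilon.
Import ListNotations.
Open Scope Z_scope.

(* An entry Phi(T)_{ia} is a frieze value of a polygon P cut out of the strip
   by two connecting arcs; it is computed by running the recurrence
   m(l+1) = a_l m(l) - m(l-1) along the boundary path i+1^o, ..., r^o, s_o,
   ..., a_o of P, with a_l the quiddities of P.  The file proceeds as follows.
   1. The recurrence as a product of SL_2 steps: three-term relation between
      neighbouring starting points, and unit Wronskian.
   2. The transfer matrix across a polygon triangulated by arcs on one line
      depends only on the degrees of its two end points (induction on the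
      triangle standing on the base edge); so gluing such a polygon onto an
      edge of the path leaves the frieze values unchanged.
   3. Consequently the frieze value does not depend on the admissible polygon:
      the far edge only matters through non-local vertices, and the near edge
      can be moved to any nested arc of T by such gluing moves ("fan moves").
      Hence Phi(T) is computed by any admissible polygon.
   4. In a polygon around j^o the quiddity of j^o is gamma_j, and the
      three-term relation and the Wronskian of step 1 give the theorem. *)

Definition zrange (a b : Z) : list Z :=
  map (fun k => a + Z.of_nat k) (seq 0 (Z.to_nat (b - a + 1))).

Lemma seq_shift (n m : nat) : seq m n = map (Nat.add m) (seq 0 n).
Proof.
  revert m; induction n as [|n IH]; intros m; simpl; auto.
  f_equal; [lia|]. rewrite IH, (IH 1%nat), map_map.
  apply map_ext. intros; lia.
Qed.

Lemma In_zrange (a b w : Z) : In w (zrange a b) <-> a <= w <= b.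
Proof.
  unfold zrange. rewrite in_map_iff. split.
  - intros [k [Hk Hin]]. apply in_seq in Hin. lia.
  - intros H. exists (Z.to_nat (w - a)). split; [lia|]. apply in_seq. lia.
Qed.

Lemma zrange_nil (a b : Z) : b < a -> zrange a b = [].
Proof. intros. unfold zrange. replace (Z.to_nat (b - a + 1)) with 0%nat by lia. reflexivity. Qed.

Lemma zrange_cons (a b : Z) : a <= b -> zrange a b = a :: zrange (a + 1) b.
Proof.
  intros. unfold zrange.
  replace (Z.to_nat (b - a + 1)) with (S (Z.to_nat (b - (a + 1) + 1))) by lia.
  simpl. f_equal; [lia|]. rewrite (seq_shift _ 1%nat), map_map. apply map_ext. intros; lia.
Qed.

Lemma zrange_app (a m b : Z) :
  a - 1 <= m -> m <= b -> zrange a b = zrange a m ++ zrange (m + 1) b.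
Proof.
  intros H1 H2. remember (Z.to_nat (m - a + 1)) as n eqn:Hn.
  revert a H1 H2 Hn. induction n as [|n IH]; intros a H1 H2 Hn.
  - rewrite (zrange_nil a m) by lia. simpl. f_equal. lia.
  - rewrite (zrange_cons a b), (zrange_cons a m) by lia. simpl. f_equal. apply IH; lia.
Qed.

Lemma zrange_snoc (a b : Z) : a <= b -> zrange a b = zrange a (b - 1) ++ [b].
Proof.
  intros. rewrite (zrange_app a (b - 1) b) by lia. f_equal.
  rewrite zrange_cons, zrange_nil by lia. f_equal. lia.
Qed.

Lemma NoDup_zrange (a b : Z) : NoDup (zrange a b).
Proof.
  unfold zrange. apply NoDup_map_NoDup_ForallPairs.
  - intros x y _ _ H. lia.
  - apply seq_NoDup.
Qed.

Definition countb {A} (f : A -> bool) (l : list A) : nat := length (filter f l).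

Lemma countb_app {A} (f : A -> bool) l1 l2 :
  countb f (l1 ++ l2) = (countb f l1 + countb f l2)%nat.
Proof. unfold countb. rewrite filter_app, length_app. reflexivity. Qed.

Lemma countb_cons {A} (f : A -> bool) x l :
  countb f (x :: l) = ((if f x then 1 else 0) + countb f l)%nat.
Proof. unfold countb. simpl. destruct (f x); reflexivity. Qed.

Lemma countb_nil {A} (f : A -> bool) : countb f [] = 0%nat.
Proof. reflexivity. Qed.

Lemma countb_none {A} (f : A -> bool) l :
  (forall x, In x l -> f x = false) -> countb f l = 0%nat.
Proof.
  intros H. induction l as [|x l IH]; simpl; auto.
  rewrite countb_cons, H by (left; auto). apply IH. intros; apply H; right; auto.
Qed.

Lemma countb_ext {A} (f g : A -> bool) l :
  (forall x, In x l -> f x = g x) -> countb f l = countb g l.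
Proof. intros. unfold countb. f_equal. apply filter_ext_in. auto. Qed.

Lemma countb_map {A B} (f : B -> bool) (g : A -> B) l :
  countb f (map g l) = countb (fun x => f (g x)) l.
Proof.
  induction l as [|x l IH]; simpl; auto.
  rewrite !countb_cons, IH. reflexivity.
Qed.

(* The frieze recurrence.  Feeding the coefficients c_1, c_2, ... to [step]
   starting from (m(k), m(k+1)) = (0, 1) produces the pairs (m(l), m(l+1)) of
   the recurrence m(l+1) = c_l m(l) - m(l-1). *)

Definition step (c : Z) (st : Z * Z) : Z * Z := (snd st, c * snd st - fst st).

Definition steps (cs : list Z) (st : Z * Z) : Z * Z :=
  fold_left (fun s c => step c s) cs st.

Lemma steps_app l1 l2 st : steps (l1 ++ l2) st = steps l2 (steps l1 st).
Proof. apply fold_left_app. Qed.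

Lemma steps_single c st : steps [c] st = step c st.
Proof. reflexivity. Qed.

Lemma steps_cons c l st : steps (c :: l) st = steps l (step c st).
Proof. reflexivity. Qed.

Lemma steps_middle before after X Y st :
  (forall st, steps X st = steps Y st) ->
  steps (before ++ X ++ after) st = steps (before ++ Y ++ after) st.
Proof. intros H. rewrite !steps_app, H. reflexivity. Qed.

Lemma steps_linear cs a b x1 y1 x2 y2 :
  steps cs (a * x1 + b * x2, a * y1 + b * y2) =
  (a * fst (steps cs (x1, y1)) + b * fst (steps cs (x2, y2)),
   a * snd (steps cs (x1, y1)) + b * snd (steps cs (x2, y2))).
Proof.
  revert x1 y1 x2 y2; induction cs as [|c cs IH]; intros; simpl; auto.
  unfold step; simpl.
  replace (c * (a * y1 + b * y2) - (a * x1 + b * x2))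
    with (a * (c * y1 - x1) + b * (c * y2 - x2)) by ring.
  apply IH.
Qed.

(* ... and preserves determinants (each step is a matrix in SL_2(Z)). *)
Lemma steps_det cs x1 y1 x2 y2 :
  fst (steps cs (x1, y1)) * snd (steps cs (x2, y2))
  - snd (steps cs (x1, y1)) * fst (steps cs (x2, y2)) = x1 * y2 - y1 * x2.
Proof.
  revert x1 y1 x2 y2; induction cs as [|c cs IH]; intros; simpl; auto.
  unfold step; simpl. rewrite IH. ring.
Qed.

(* Solutions started one position apart obey the recurrence in the starting
   position: m_{k-1} + m_{k+1} = c_k m_k. *)
Lemma steps_three_term c1 c2 cs :
  fst (steps (c1 :: c2 :: cs) (0, 1)) + fst (steps cs (0, 1))
  = c1 * fst (steps (c2 :: cs) (0, 1)).
Proof.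
  rewrite !steps_cons.
  replace (step c2 (step c1 (0, 1))) with (c1 * 1 + (-1) * 0, c1 * c2 + (-1) * 1)
    by (unfold step; simpl; f_equal; ring).
  rewrite steps_linear. unfold step. cbn [fst snd]. replace (c2 * 1 - 0) with c2 by ring. ring.
Qed.

Lemma steps_wronskian c cs d :
  fst (steps (c :: cs) (0, 1)) * fst (steps (cs ++ [d]) (0, 1))
  - fst (steps (c :: cs ++ [d]) (0, 1)) * fst (steps cs (0, 1)) = 1.
Proof.
  rewrite app_comm_cons, !steps_app, steps_cons.
  pose proof (steps_det cs 1 c 0 1) as D. replace (1 * 1 - c * 0) with 1 in D by ring.
  replace (step c (0, 1)) with (1, c) by (unfold step; simpl; f_equal; ring).
  destruct (steps cs (1, c)) as [u1 v1], (steps cs (0, 1)) as [u2 v2].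
  unfold steps, step; simpl in *. exact D.
Qed.

(* Arcs between the integer points of a line.  [E a b] (meaningful for
   a + 2 <= b) says that the arc (a, b) is present.  The arcs of one edge of
   the strip, restricted to an interval [x, y] whose end points are joined,
   triangulate the polygon with vertices x, ..., y; the content of this section
   is the transfer matrix of the frieze recurrence across such a polygon. *)
Section LineArcs.

Variable E : Z -> Z -> bool.

Definition linked (w u : Z) : bool :=
  if w + 2 <=? u then E w u else if u + 2 <=? w then E u w else false.

Definition deg_in (x y w : Z) : Z := Z.of_nat (countb (linked w) (zrange x y)).

Definition noncrossing : Prop :=
  forall a b c d, a + 2 <= b -> c + 2 <= d -> E a b = true -> E c d = true ->
    a < c < b -> b < d -> False.

(* Every missing arc inside [x, y] crosses an arc inside [x, y]: the arcs in
   [x, y] form a maximal non-crossing family, i.e. a triangulation. *)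
Definition saturated (x y : Z) : Prop :=
  forall a b, x <= a -> b <= y -> a + 2 <= b -> E a b = false ->
    exists c d, x <= c /\ d <= y /\ c + 2 <= d /\ E c d = true /\
      ((a < c < b /\ b < d) \/ (c < a /\ a < d < b)).

Lemma linked_near w u : w - 2 < u < w + 2 -> linked w u = false.
Proof.
  intros. unfold linked.
  destruct (Z.leb_spec (w + 2) u); [lia|]. destruct (Z.leb_spec (u + 2) w); [lia|]. auto.
Qed.

Lemma linked_up w u : w + 2 <= u -> linked w u = E w u.
Proof. intros. unfold linked. destruct (Z.leb_spec (w + 2) u); [auto|lia]. Qed.

Lemma linked_down w u : u + 2 <= w -> linked w u = E u w.
Proof.
  intros. unfold linked.
  destruct (Z.leb_spec (w + 2) u); [lia|]. destruct (Z.leb_spec (u + 2) w); [auto|lia].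
Qed.

Lemma linked_none w u :
  (w + 2 <= u -> E w u = false) -> (u + 2 <= w -> E u w = false) -> linked w u = false.
Proof.
  intros. unfold linked.
  destruct (Z.leb_spec (w + 2) u); [auto|]. destruct (Z.leb_spec (u + 2) w); auto.
Qed.

Lemma saturated_ends x y : saturated x y -> x + 2 <= y -> E x y = true.
Proof.
  intros HS Hxy. destruct (E x y) eqn:He; auto.
  destruct (HS x y) as [c [d Hcd]]; auto; lia.
Qed.

Lemma last_witness (P : Z -> bool) lo hi : lo <= hi -> P lo = true ->
  exists z, lo <= z <= hi /\ P z = true /\ forall w, z < w <= hi -> P w = false.
Proof.
  remember (Z.to_nat (hi - lo)) as n eqn:Hn. revert hi Hn.
  induction n as [|n IH]; intros hi Hn Hle Hp.
  - exists lo. repeat split; auto; lia.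
  - destruct (P hi) eqn:Ph.
    + exists hi. repeat split; auto; lia.
    + destruct (IH (hi - 1)) as [z [Hz1 [Hz2 Hz3]]]; try lia; auto.
      exists z. repeat split; auto; try lia. intros w Hw.
      destruct (Z.eq_dec w hi); [subst; auto|]. apply Hz3; lia.
Qed.

Hypothesis HN : noncrossing.

(* z is the apex of the triangle standing on the edge (x, y) of the
   triangulated polygon x, ..., y. *)
Definition apex (x y z : Z) : Prop :=
  x < z < y /\ (x + 2 <= z -> E x z = true) /\ (z + 2 <= y -> E z y = true).

(* The apex is the farthest neighbour of x strictly inside (x, y). *)
Lemma apex_exists x y : saturated x y -> x + 1 < y -> exists z, apex x y z.
Proof.
  intros HS Hxy.
  destruct (last_witness (fun w => (w =? x + 1) || E x w) (x + 1) (y - 1))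
    as [z [Hz [Pz Mz]]]; [lia|rewrite Z.eqb_refl; auto|].
  assert (Exz : x + 2 <= z -> E x z = true).
  { intros. apply orb_true_iff in Pz as [P|P]; auto. apply Z.eqb_eq in P. lia. }
  assert (Max : forall w, z < w <= y - 1 -> E x w = false).
  { intros w Hw. specialize (Mz w Hw). apply orb_false_iff in Mz. tauto. }
  exists z. repeat split; try lia; auto. intros Hzy.
  destruct (E z y) eqn:E1; auto.
  destruct (HS z y) as [c [d [Hc [Hd [Hcd [Ecd [Hcr|Hcr]]]]]]]; try lia; auto.
  destruct (Z.eq_dec c x) as [->|Hcx].
  - rewrite Max in Ecd; [discriminate|lia].
  - exfalso. apply (HN x z c d); auto; try lia. apply Exz. lia.
Qed.

(* Cutting the triangle (x, z, y) off splits the polygon into x, ..., z and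
   z, ..., y; the degrees add up accordingly. *)
Section Apex.

Variables x y z : Z.
Hypothesis Hapex : apex x y z.
Hypothesis Exy : E x y = true.

Lemma deg_left_end : deg_in x y x = deg_in x z x + 1.
Proof.
  destruct Hapex as [Hz [Exz Ezy]]. unfold deg_in.
  rewrite (zrange_app x z y), countb_app, (zrange_snoc (z + 1) y), countb_app by lia.
  rewrite (countb_none _ (zrange (z + 1) (y - 1))).
  2:{ intros w Hw. apply In_zrange in Hw. rewrite linked_up by lia.
      destruct (E x w) eqn:Exw; auto. exfalso.
      apply (HN x w z y); auto; try lia. apply Ezy. lia. }
  rewrite countb_cons, linked_up, Exy, countb_nil by lia. lia.
Qed.

Lemma deg_right_end : deg_in x y y = deg_in z y y + 1.
Proof.
  destruct Hapex as [Hz [Exz Ezy]]. unfold deg_in.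
  rewrite (zrange_app x (z - 1) y), countb_app, (zrange_cons x (z - 1)), countb_cons by lia.
  rewrite linked_down, Exy by lia.
  rewrite (countb_none _ (zrange (x + 1) (z - 1))).
  2:{ intros w Hw. apply In_zrange in Hw. rewrite linked_down by lia.
      destruct (E w y) eqn:Ew; auto. exfalso.
      apply (HN x z w y); auto; try lia. apply Exz. lia. }
  replace (z - 1 + 1) with z by lia. lia.
Qed.

Lemma deg_apex : deg_in x y z = deg_in x z z + deg_in z y z.
Proof.
  destruct Hapex as [Hz _]. unfold deg_in.
  rewrite (zrange_app x (z - 1) y), countb_app, (zrange_snoc x z), countb_app by lia.
  rewrite countb_cons, linked_near, countb_nil by lia.
  replace (z - 1 + 1) with z by lia. lia.
Qed.

Lemma deg_left_inner w : x < w < z -> deg_in x y w = deg_in x z w.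
Proof.
  destruct Hapex as [Hz [Exz Ezy]]. intros Hw. unfold deg_in.
  rewrite (zrange_app x z y), countb_app by lia.
  rewrite (countb_none _ (zrange (z + 1) y)); [lia|].
  intros u Hu. apply In_zrange in Hu. apply linked_none; intros; [|lia].
  destruct (E w u) eqn:Ew; auto. exfalso.
  apply (HN x z w u); auto; try lia. apply Exz. lia.
Qed.

Lemma deg_right_inner w : z < w < y -> deg_in x y w = deg_in z y w.
Proof.
  destruct Hapex as [Hz [Exz Ezy]]. intros Hw. unfold deg_in.
  rewrite (zrange_app x (z - 1) y), countb_app by lia.
  replace (z - 1 + 1) with z by lia.
  rewrite (countb_none _ (zrange x (z - 1))); [lia|].
  intros u Hu. apply In_zrange in Hu. apply linked_none; intros; [lia|].
  destruct (E u w) eqn:Ew; auto. exfalso.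
  apply (HN u w z y); auto; try lia. apply Ezy. lia.
Qed.

Lemma saturated_left : saturated x y -> saturated x z.
Proof.
  destruct Hapex as [Hz [Exz Ezy]]. intros HS a b Ha Hb Hab Eab.
  destruct (HS a b) as [c [d [Hc [Hd [Hcd [Ecd Hcr]]]]]]; try lia; auto.
  exists c, d. repeat split; auto; try lia.
  destruct (Z.le_gt_cases d z); [lia|]. exfalso.
  destruct Hcr as [Hcr|Hcr]; [|lia].
  apply (HN x z c d); auto; try lia. apply Exz. lia.
Qed.

Lemma saturated_right : saturated x y -> saturated z y.
Proof.
  destruct Hapex as [Hz [Exz Ezy]]. intros HS a b Ha Hb Hab Eab.
  destruct (HS a b) as [c [d [Hc [Hd [Hcd [Ecd Hcr]]]]]]; try lia; auto.
  exists c, d. repeat split; auto; try lia.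
  destruct (Z.le_gt_cases z c); [lia|]. exfalso.
  destruct Hcr as [Hcr|Hcr]; [lia|].
  apply (HN c d z y); auto; try lia. apply Ezy. lia.
Qed.

End Apex.

Lemma polygon_transfer x y : x < y -> saturated x y -> forall u v,
  steps (map (fun w => 1 + deg_in x y w) (zrange (x + 1) (y - 1))) (u, v) =
  (deg_in x y y * v + (1 - deg_in x y x * deg_in x y y) * u, v - deg_in x y x * u).
Proof.
  remember (Z.to_nat (y - x)) as n eqn:Hn. revert x y Hn.
  induction n as [n IH] using (well_founded_induction lt_wf).
  intros x y Hn Hxy HS u v.
  destruct (Z.eq_dec y (x + 1)) as [->|Hy].
  - rewrite zrange_nil by lia.
    assert (H0 : forall w, x <= w <= x + 1 -> deg_in x (x + 1) w = 0).
    { intros w Hw. unfold deg_in. rewrite countb_none; auto.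
      intros u' Hu'. apply In_zrange in Hu'. apply linked_near. lia. }
    rewrite !H0 by lia. cbn [map steps fold_left]. f_equal; ring.
  - assert (Exy : E x y = true) by (apply saturated_ends; auto; lia).
    destruct (apex_exists x y HS ltac:(lia)) as [z Hz].
    pose proof Hz as [Hzr _].
    assert (HSl : saturated x z) by apply (saturated_left x y z Hz HS).
    assert (HSr : saturated z y) by apply (saturated_right x y z Hz HS).
    rewrite (zrange_app (x + 1) (z - 1) (y - 1)) by lia. replace (z - 1 + 1) with z by lia.
    rewrite (zrange_cons z (y - 1)) by lia.
    rewrite map_app, steps_app. cbn [map]. rewrite steps_cons.
    rewrite (map_ext_in _ (fun w => 1 + deg_in x z w) (zrange (x + 1) (z - 1))).
    2:{ intros w Hw. apply In_zrange in Hw. rewrite (deg_left_inner x y z Hz) by lia. auto. }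
    rewrite (map_ext_in (fun w => 1 + deg_in x y w) (fun w => 1 + deg_in z y w)
               (zrange (z + 1) (y - 1))).
    2:{ intros w Hw. apply In_zrange in Hw. rewrite (deg_right_inner x y z Hz) by lia. auto. }
    rewrite (IH (Z.to_nat (z - x))) by (auto; lia).
    unfold step; cbn [fst snd].
    rewrite (IH (Z.to_nat (y - z))) by (auto; lia).
    rewrite (deg_left_end x y z Hz Exy), (deg_right_end x y z Hz Exy), (deg_apex x y z Hz).
    f_equal; ring.
Qed.

(* Gluing a triangulated polygon x, ..., y onto an edge (b, a) of the path of
   coefficients: b gains the arcs at x, a gains those at y plus one more arc. *)
Lemma glue_polygon_right x y : x < y -> saturated x y -> forall b a st,
  steps ([b + 1 + deg_in x y x] ++ map (fun w => 1 + deg_in x y w) (zrange (x + 1) (y - 1))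
         ++ [1 + deg_in x y y; a + 1]) st = steps [b; a] st.
Proof.
  intros Hxy HS b a [u v].
  rewrite !steps_app, !steps_single. cbv [step fst snd].
  rewrite polygon_transfer by auto. cbv [steps fold_left step fst snd]. f_equal; ring.
Qed.

Lemma glue_polygon_left x y : x < y -> saturated x y -> forall b a st,
  steps ([b + 1; 1 + deg_in x y x] ++ map (fun w => 1 + deg_in x y w) (zrange (x + 1) (y - 1))
         ++ [a + 1 + deg_in x y y]) st = steps [b; a] st.
Proof.
  intros Hxy HS b a [u v].
  rewrite !steps_app, (steps_cons _ [_]), !steps_single. cbv [step fst snd].
  rewrite polygon_transfer by auto. cbv [steps fold_left step fst snd]. f_equal; ring.
Qed.

End LineArcs.

Definition upper_arcs (T : arc -> bool) (a b : Z) : bool := T (Up a b).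
Definition lower_arcs (T : arc -> bool) (a b : Z) : bool := T (Low a b).

Definition conn_diag (T : arc -> bool) (p q r s x y : Z) : bool :=
  T (Conn x y) && negb ((x =? p) && (y =? q)) && negb ((x =? r) && (y =? s)).

Lemma arc_eq_dec_Conn x y p q :
  (if arc_eq_dec (Conn x y) (Conn p q) then true else false) = (x =? p) && (y =? q).
Proof.
  destruct (arc_eq_dec (Conn x y) (Conn p q)) as [H|H].
  - inversion H; subst. rewrite !Z.eqb_refl. auto.
  - destruct (Z.eqb_spec x p), (Z.eqb_spec y q); subst; auto; congruence.
Qed.

Lemma is_diag_UU T p q r s x u :
  is_diag T p q r s (U x) (U u) = linked (upper_arcs T) x u.
Proof.
  unfold is_diag, mk_arc, linked, upper_arcs.
  destruct (x + 2 <=? u); [|destruct (u + 2 <=? x)]; auto;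
  repeat (destruct arc_eq_dec; [discriminate|]); simpl; rewrite !andb_true_r; auto.
Qed.

Lemma is_diag_LL T p q r s x u :
  is_diag T p q r s (L x) (L u) = linked (lower_arcs T) x u.
Proof.
  unfold is_diag, mk_arc, linked, lower_arcs.
  destruct (x + 2 <=? u); [|destruct (u + 2 <=? x)]; auto;
  repeat (destruct arc_eq_dec; [discriminate|]); simpl; rewrite !andb_true_r; auto.
Qed.

Lemma is_diag_UL T p q r s x y : is_diag T p q r s (U x) (L y) = conn_diag T p q r s x y.
Proof. unfold is_diag, mk_arc, conn_diag. rewrite !arc_eq_dec_Conn. auto. Qed.

Lemma is_diag_LU T p q r s x y : is_diag T p q r s (L y) (U x) = conn_diag T p q r s x y.
Proof. unfold is_diag, mk_arc, conn_diag. rewrite !arc_eq_dec_Conn. auto. Qed.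

Lemma is_diag_refl T p q r s v : is_diag T p q r s v v = false.
Proof. destruct v; [rewrite is_diag_UU|rewrite is_diag_LL]; apply linked_near; lia. Qed.

Definition poly_vertices (p q r s : Z) : list vtx := map U (zrange p r) ++ map L (zrange s q).

Definition quiddity (T : arc -> bool) (p q r s : Z) (v : vtx) : Z :=
  1 + Z.of_nat (countb (is_diag T p q r s v) (poly_vertices p q r s)).

Lemma quiddity_U T p q r s x : quiddity T p q r s (U x) =
  1 + Z.of_nat (countb (linked (upper_arcs T) x) (zrange p r))
    + Z.of_nat (countb (conn_diag T p q r s x) (zrange s q)).
Proof.
  unfold quiddity, poly_vertices. rewrite countb_app, !countb_map.
  rewrite (countb_ext (fun u => is_diag T p q r s (U x) (U u)) (linked (upper_arcs T) x))
    by (intros; apply is_diag_UU).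
  rewrite (countb_ext (fun u => is_diag T p q r s (U x) (L u)) (conn_diag T p q r s x))
    by (intros; apply is_diag_UL).
  lia.
Qed.

Lemma quiddity_L T p q r s y : quiddity T p q r s (L y) =
  1 + Z.of_nat (countb (fun x => conn_diag T p q r s x y) (zrange p r))
    + Z.of_nat (countb (linked (lower_arcs T) y) (zrange s q)).
Proof.
  unfold quiddity, poly_vertices. rewrite countb_app, !countb_map.
  rewrite (countb_ext (fun u => is_diag T p q r s (L y) (U u)) (fun x => conn_diag T p q r s x y))
    by (intros; apply is_diag_LU).
  rewrite (countb_ext (fun u => is_diag T p q r s (L y) (L u)) (linked (lower_arcs T) y))
    by (intros; apply is_diag_LL).
  lia.
Qed.

Lemma map_poly_vtx_upper p r s m n : (m + n <= Z.to_nat (r - p + 1))%nat ->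
  map (poly_vtx p r s) (seq m n)
  = map U (zrange (p + Z.of_nat m) (p + Z.of_nat m + Z.of_nat n - 1)).
Proof.
  intros. rewrite seq_shift. unfold zrange. rewrite !map_map.
  replace (Z.to_nat (p + Z.of_nat m + Z.of_nat n - 1 - (p + Z.of_nat m) + 1)) with n by lia.
  apply map_ext_in. intros k Hk. apply in_seq in Hk. unfold poly_vtx.
  destruct (Z.leb_spec (Z.of_nat (m + k)) (r - p)); [|lia]. f_equal. lia.
Qed.

Lemma map_poly_vtx_lower p r s m n : (Z.to_nat (r - p + 1) <= m)%nat -> p <= r ->
  map (poly_vtx p r s) (seq m n) =
  map L (zrange (s + Z.of_nat m - (r - p + 1)) (s + Z.of_nat m - (r - p + 1) + Z.of_nat n - 1)).
Proof.
  intros. rewrite seq_shift. unfold zrange. rewrite !map_map.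
  replace (Z.to_nat (s + Z.of_nat m - (r - p + 1) + Z.of_nat n - 1
                     - (s + Z.of_nat m - (r - p + 1)) + 1)) with n by lia.
  apply map_ext_in. intros k Hk. apply in_seq in Hk. unfold poly_vtx.
  destruct (Z.leb_spec (Z.of_nat (m + k)) (r - p)); [lia|]. f_equal. lia.
Qed.

Lemma poly_vertices_enum p q r s : p <= r -> s <= q ->
  map (poly_vtx p r s) (seq 0 (poly_size p q r s)) = poly_vertices p q r s.
Proof.
  intros. unfold poly_size, poly_vertices.
  replace (Z.to_nat (r - p + 1 + (q - s + 1)))
    with (Z.to_nat (r - p + 1) + Z.to_nat (q - s + 1))%nat by lia.
  rewrite seq_app, map_app. f_equal.
  - rewrite map_poly_vtx_upper by lia. f_equal. f_equal; lia.
  - rewrite map_poly_vtx_lower by lia. f_equal. f_equal; lia.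
Qed.

Lemma poly_a_quiddity T p q r s m : p <= r -> s <= q ->
  poly_a T p q r s m = quiddity T p q r s (poly_vtx p r s m).
Proof.
  intros. unfold poly_a, quiddity. do 2 f_equal.
  rewrite <- poly_vertices_enum by auto. rewrite countb_map. unfold countb. f_equal.
  apply filter_ext. intros k. destruct (Nat.eqb_spec k m) as [->|]; simpl; auto.
  symmetry. apply is_diag_refl.
Qed.

Lemma mpair_steps a k d : mpair a k d = steps (map a (seq (k + 1) d)) (0, 1).
Proof.
  induction d as [|d IH]; [reflexivity|].
  rewrite seq_S, map_app, steps_app, <- IH. simpl.
  destruct (mpair a k d) as [x y]. unfold step. simpl.
  replace (k + 1 + d)%nat with (k + d + 1)%nat by lia. reflexivity.
Qed.

Definition frieze_path (r s i a : Z) : list vtx := map U (zrange (i + 1) r) ++ map L (zrange s a).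

Definition frieze_val (T : arc -> bool) (p q r s i a : Z) : Z :=
  fst (steps (map (quiddity T p q r s) (frieze_path r s i a)) (0, 1)).

Lemma friese_frieze_val T p q r s i a : p < i < r -> s < a < q ->
  friese T p q r s (Z.to_nat (i - p)) (Z.to_nat ((r - p + 1) + (a - s)))
  = frieze_val T p q r s i a.
Proof.
  intros. unfold friese, frieze_val.
  set (N := poly_size p q r s).
  set (k := Z.to_nat (i - p)). set (l := Z.to_nat ((r - p + 1) + (a - s))).
  assert (HN : N = Z.to_nat (r - p + 1 + (q - s + 1))) by reflexivity.
  assert (Hd : ((l + N - k) mod N = l - k)%nat) by (symmetry; apply Nat.mod_unique with 1%nat; lia).
  rewrite Hd, mpair_steps. do 2 f_equal.
  rewrite (map_ext_in _ (fun m => quiddity T p q r s (poly_vtx p r s m))).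
  2:{ intros m Hm. apply in_seq in Hm. rewrite Nat.mod_small by lia. apply poly_a_quiddity; lia. }
  rewrite <- (map_map (poly_vtx p r s)). f_equal.
  unfold frieze_path.
  replace (l - k)%nat with (Z.to_nat (r - i) + Z.to_nat (a - s + 1))%nat by lia.
  rewrite seq_app, map_app. f_equal.
  - rewrite map_poly_vtx_upper by lia. f_equal. f_equal; lia.
  - rewrite map_poly_vtx_lower by lia. f_equal. f_equal; lia.
Qed.

Definition arcs_valid (T : arc -> bool) : Prop := forall x, T x = true -> valid_arc x.
Definition arcs_noncrossing (T : arc -> bool) : Prop :=
  forall x y, T x = true -> T y = true -> x <> y -> ~ cross x y.
Definition arcs_maximal (T : arc -> bool) : Prop :=
  forall x, valid_arc x -> T x = false -> exists y, T y = true /\ cross x y.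

Ltac crossing_absurd NC a b :=
  exfalso; apply (NC a b); [assumption|assumption|
    (let E := fresh in intro E; inversion E; subst; lia) | simpl; nia].

Lemma eqb_neq_false x y : x <> y -> (x =? y) = false.
Proof. apply Z.eqb_neq. Qed.

Lemma conn_diag_absent T p q r s x y : T (Conn x y) = false -> conn_diag T p q r s x y = false.
Proof. intros H. unfold conn_diag. rewrite H. auto. Qed.

Lemma conn_diag_edge T p q r s : conn_diag T p q r s r s = false.
Proof. unfold conn_diag. rewrite !Z.eqb_refl, !andb_false_r. auto. Qed.

Lemma conn_diag_same_edges T p q r s p' q' r' s' x y :
  ((x =? p) && (y =? q)) = ((x =? p') && (y =? q')) ->
  ((x =? r) && (y =? s)) = ((x =? r') && (y =? s')) ->
  conn_diag T p q r s x y = conn_diag T p' q' r' s' x y.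
Proof. intros H1 H2. unfold conn_diag. rewrite H1, H2. auto. Qed.

Section Triangulation.

Variable T : arc -> bool.
Hypothesis NC : arcs_noncrossing T.

Lemma conn_monotone a b c d : T (Conn a b) = true -> T (Conn c d) = true ->
  (a - c) * (b - d) <= 0.
Proof.
  intros H1 H2. destruct (arc_eq_dec (Conn a b) (Conn c d)) as [E|E].
  - inversion E; subst. nia.
  - destruct (Z_le_gt_dec ((a - c) * (b - d)) 0); auto.
    exfalso. apply (NC _ _ H1 H2 E). simpl. auto.
Qed.

Lemma conn_nested a b c d : T (Conn a b) = true -> T (Conn c d) = true ->
  (a <= c /\ d <= b) \/ (c <= a /\ b <= d).
Proof.
  intros H1 H2. pose proof (conn_monotone a b c d H1 H2).
  destruct (Z.lt_trichotomy a c) as [E|[E|E]]; [left; nia|subst|right; nia].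
  destruct (Z_le_gt_dec b d); [right|left]; lia.
Qed.

Lemma upper_noncrossing : noncrossing (upper_arcs T).
Proof.
  intros a b c d H1 H2 E1 E2 H3 H4. unfold upper_arcs in *.
  apply (NC (Up a b) (Up c d)); auto. intro E; inversion E; lia. simpl. lia.
Qed.

Lemma lower_noncrossing : noncrossing (lower_arcs T).
Proof.
  intros a b c d H1 H2 E1 E2 H3 H4. unfold lower_arcs in *.
  apply (NC (Low a b) (Low c d)); auto. intro E; inversion E; lia. simpl. lia.
Qed.

Lemma quiddity_far_U p q r s p' q' x :
  T (Conn p q) = true -> p' <= p -> q <= q' -> p < x <= r -> s <= q ->
  quiddity T p q r s (U x) = quiddity T p' q' r s (U x).
Proof.
  intros Hpq H1 H2 H3 H4. rewrite !quiddity_U.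
  rewrite (zrange_app p' (p - 1) r), (zrange_app s q q'), !countb_app by lia.
  replace (p - 1 + 1) with p by lia.
  rewrite (countb_none _ (zrange p' (p - 1))).
  2:{ intros u Hu. apply In_zrange in Hu. apply linked_none; intros; [lia|].
      unfold upper_arcs. destruct (T (Up u x)) eqn:E; auto.
      crossing_absurd NC (Up u x) (Conn p q). }
  rewrite (countb_none (conn_diag T p' q' r s x) (zrange (q + 1) q')).
  2:{ intros y Hy. apply In_zrange in Hy. apply conn_diag_absent.
      destruct (T (Conn x y)) eqn:E; auto. crossing_absurd NC (Conn x y) (Conn p q). }
  rewrite (countb_ext (conn_diag T p q r s x) (conn_diag T p' q' r s x)); [lia|].
  intros y _. apply conn_diag_same_edges; auto.
  rewrite (eqb_neq_false x p), (eqb_neq_false x p') by lia. auto.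
Qed.

Lemma quiddity_far_L p q r s p' q' y :
  T (Conn p q) = true -> p' <= p -> q <= q' -> s <= y < q -> p <= r ->
  quiddity T p q r s (L y) = quiddity T p' q' r s (L y).
Proof.
  intros Hpq H1 H2 H3 H4. rewrite !quiddity_L.
  rewrite (zrange_app p' (p - 1) r), (zrange_app s q q'), !countb_app by lia.
  replace (p - 1 + 1) with p by lia.
  rewrite (countb_none _ (zrange p' (p - 1))).
  2:{ intros u Hu. apply In_zrange in Hu. apply conn_diag_absent.
      destruct (T (Conn u y)) eqn:E; auto. crossing_absurd NC (Conn u y) (Conn p q). }
  rewrite (countb_none _ (zrange (q + 1) q')).
  2:{ intros u Hu. apply In_zrange in Hu. apply linked_none; intros; [|lia].
      unfold lower_arcs. destruct (T (Low y u)) eqn:E; auto.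
      crossing_absurd NC (Low y u) (Conn p q). }
  rewrite (countb_ext (fun x => conn_diag T p q r s x y) (fun x => conn_diag T p' q' r s x y)); [lia|].
  intros x _. apply conn_diag_same_edges; auto.
  rewrite (eqb_neq_false y q), (eqb_neq_false y q') by lia. rewrite !andb_false_r. auto.
Qed.

Lemma frieze_val_far_edge p q r s p' q' i a :
  T (Conn p q) = true -> p' <= p -> q <= q' -> p < i < r -> s < a < q ->
  frieze_val T p q r s i a = frieze_val T p' q' r s i a.
Proof.
  intros. unfold frieze_val. do 2 f_equal. apply map_ext_in. intros v Hv.
  unfold frieze_path in Hv. apply in_app_or in Hv as [Hv|Hv];
  apply in_map_iff in Hv as [w [<- Hin]]; apply In_zrange in Hin.
  - apply quiddity_far_U; auto; lia.
  - apply quiddity_far_L; auto; lia.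
Qed.

(* Let r < r2 be such that no connecting arc of T ends strictly
   between r^o and r2^o, and suppose the upper arcs triangulate the polygon
   r^o, ..., r2^o.  Replacing the edge (r, s) of P by (r2, s) glues this
   polygon, together with the triangle (r^o, r2^o, s_o), onto P.  Apart from
   the new vertices only the quiddities of r^o and s_o change, and by
   [glue_polygon_right] the frieze values at (i, a) do not change. *)
Section FanUpper.

Variables p q r s r2 : Z.
Hypothesis Hrs : T (Conn r s) = true.
Hypothesis Hlt : r < r2.
Hypothesis no_conn_between : forall x y, r < x < r2 -> T (Conn x y) = false.
Hypothesis Hpr : p < r.
Hypothesis Hsq : s < q.

Lemma fan_upper_U_before x : x < r -> quiddity T p q r s (U x) = quiddity T p q r2 s (U x).
Proof.
  intros Hx. rewrite !quiddity_U, (zrange_app p r r2), countb_app by lia.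
  rewrite (countb_none _ (zrange (r + 1) r2)).
  2:{ intros u Hu. apply In_zrange in Hu. apply linked_none; intros; [|lia].
      unfold upper_arcs. destruct (T (Up x u)) eqn:E; auto.
      crossing_absurd NC (Up x u) (Conn r s). }
  rewrite (countb_ext (conn_diag T p q r s x) (conn_diag T p q r2 s x)); [lia|].
  intros y _. apply conn_diag_same_edges; auto.
  rewrite (eqb_neq_false x r), (eqb_neq_false x r2) by lia. auto.
Qed.

Lemma fan_upper_L_after y : s < y -> quiddity T p q r s (L y) = quiddity T p q r2 s (L y).
Proof.
  intros Hy. rewrite !quiddity_L, (zrange_app p r r2), countb_app by lia.
  rewrite (countb_none _ (zrange (r + 1) r2)).
  2:{ intros u Hu. apply In_zrange in Hu. apply conn_diag_absent.
      destruct (Z.eq_dec u r2) as [->|]; [|apply no_conn_between; lia].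
      destruct (T (Conn r2 y)) eqn:E; auto. crossing_absurd NC (Conn r2 y) (Conn r s). }
  rewrite (countb_ext (fun x => conn_diag T p q r s x y) (fun x => conn_diag T p q r2 s x y)); [lia|].
  intros x _. apply conn_diag_same_edges; auto.
  rewrite (eqb_neq_false y s). rewrite !andb_false_r. auto. lia.
Qed.

Lemma conn_diag_old_edge : conn_diag T p q r2 s r s = true.
Proof.
  unfold conn_diag. rewrite Hrs, (eqb_neq_false r p), (eqb_neq_false r r2) by lia. auto.
Qed.

Lemma fan_upper_U_pivot :
  quiddity T p q r2 s (U r) = quiddity T p q r s (U r) + 1 + deg_in (upper_arcs T) r r2 r.
Proof.
  rewrite !quiddity_U. unfold deg_in.
  rewrite (zrange_app p r r2), countb_app, (zrange_cons r r2), (countb_cons _ r) by lia.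
  rewrite (linked_near _ r r), (zrange_cons s q), !countb_cons by lia.
  rewrite conn_diag_edge, conn_diag_old_edge.
  rewrite (countb_ext (conn_diag T p q r s r) (conn_diag T p q r2 s r) (zrange (s + 1) q)); [lia|].
  intros y Hy. apply In_zrange in Hy. apply conn_diag_same_edges; auto.
  rewrite !(eqb_neq_false y s) by lia. rewrite !andb_false_r. auto.
Qed.

Lemma fan_upper_L_pivot : quiddity T p q r2 s (L s) = quiddity T p q r s (L s) + 1.
Proof.
  rewrite !quiddity_L, (zrange_app p r r2), (zrange_snoc p r), !countb_app by lia.
  rewrite (countb_none _ (zrange (r + 1) r2)).
  2:{ intros u Hu. apply In_zrange in Hu. destruct (Z.eq_dec u r2) as [->|].
      - apply conn_diag_edge.
      - apply conn_diag_absent, no_conn_between. lia. }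
  rewrite (countb_ext (fun x => conn_diag T p q r s x s) (fun x => conn_diag T p q r2 s x s)
             (zrange p (r - 1))).
  2:{ intros x Hx. apply In_zrange in Hx. apply conn_diag_same_edges; auto.
      rewrite (eqb_neq_false x r), (eqb_neq_false x r2) by lia. auto. }
  rewrite !countb_cons, conn_diag_edge, conn_diag_old_edge, !countb_nil. lia.
Qed.

Lemma fan_upper_U_new z : r < z <= r2 ->
  quiddity T p q r2 s (U z) = 1 + deg_in (upper_arcs T) r r2 z.
Proof.
  intros Hz. rewrite quiddity_U. unfold deg_in.
  rewrite (zrange_app p (r - 1) r2), countb_app by lia. replace (r - 1 + 1) with r by lia.
  rewrite (countb_none _ (zrange p (r - 1))).
  2:{ intros u Hu. apply In_zrange in Hu. apply linked_none; intros; [lia|].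
      unfold upper_arcs. destruct (T (Up u z)) eqn:E; auto.
      crossing_absurd NC (Up u z) (Conn r s). }
  rewrite (countb_none _ (zrange s q)); [lia|].
  intros y Hy. apply In_zrange in Hy. destruct (Z.eq_dec z r2) as [->|].
  - destruct (Z.eq_dec y s) as [->|]; [apply conn_diag_edge|].
    apply conn_diag_absent. destruct (T (Conn r2 y)) eqn:E; auto.
    crossing_absurd NC (Conn r2 y) (Conn r s).
  - apply conn_diag_absent, no_conn_between. lia.
Qed.

Lemma frieze_val_fan_upper i a :
  saturated (upper_arcs T) r r2 -> p < i < r -> s < a < q ->
  frieze_val T p q r s i a = frieze_val T p q r2 s i a.
Proof.
  intros HS Hi Ha. unfold frieze_val, frieze_path.
  rewrite (zrange_snoc (i + 1) r), (zrange_cons s a) by lia.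
  rewrite (zrange_app (i + 1) (r - 1) r2) by lia. replace (r - 1 + 1) with r by lia.
  rewrite (zrange_cons r r2), (zrange_snoc (r + 1) r2) by lia.
  repeat (rewrite !map_app; cbn [map]). rewrite !map_map.
  rewrite (map_ext_in (fun x => quiddity T p q r2 s (U x)) (fun x => quiddity T p q r s (U x))
             (zrange (i + 1) (r - 1))).
  2:{ intros x Hx. apply In_zrange in Hx. symmetry. apply fan_upper_U_before. lia. }
  rewrite (map_ext_in (fun y => quiddity T p q r2 s (L y)) (fun y => quiddity T p q r s (L y))
             (zrange (s + 1) a)).
  2:{ intros y Hy. apply In_zrange in Hy. symmetry. apply fan_upper_L_after. lia. }
  rewrite (map_ext_in (fun x => quiddity T p q r2 s (U x)) (fun w => 1 + deg_in (upper_arcs T) r r2 w)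
             (zrange (r + 1) (r2 - 1))).
  2:{ intros w Hw. apply In_zrange in Hw. apply fan_upper_U_new. lia. }
  rewrite fan_upper_U_pivot, fan_upper_L_pivot, (fan_upper_U_new r2) by lia.
  set (before := map (fun x => quiddity T p q r s (U x)) (zrange (i + 1) (r - 1))).
  set (after := map (fun y => quiddity T p q r s (L y)) (zrange (s + 1) a)).
  transitivity (fst (steps (before ++ [quiddity T p q r s (U r); quiddity T p q r s (L s)]
                            ++ after) (0, 1))).
  { rewrite <- app_assoc. reflexivity. }
  rewrite (steps_middle before after _ _ _
             (fun st => eq_sym (glue_polygon_right _ upper_noncrossing r r2 Hlt HS _ _ st))).
  rewrite <- !app_assoc. cbn [app]. repeat rewrite <- app_assoc. reflexivity.
Qed.

End FanUpper.

(* The mirror move on the lower edge: no connecting arc ends strictly between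
   s2_o and s_o, and replacing the edge (r, s) of P by (r, s2) glues on the
   polygon s2_o, ..., s_o triangulated by lower arcs ([glue_polygon_left]). *)
Section FanLower.

Variables p q r s s2 : Z.
Hypothesis Hrs : T (Conn r s) = true.
Hypothesis Hlt : s2 < s.
Hypothesis no_conn_between : forall x y, s2 < y < s -> T (Conn x y) = false.
Hypothesis Hpr : p < r.
Hypothesis Hsq : s < q.

Lemma fan_lower_U_before x : x < r -> quiddity T p q r s (U x) = quiddity T p q r s2 (U x).
Proof.
  intros Hx. rewrite !quiddity_U, (zrange_app s2 (s - 1) q), countb_app by lia.
  replace (s - 1 + 1) with s by lia.
  rewrite (countb_none _ (zrange s2 (s - 1))).
  2:{ intros y Hy. apply In_zrange in Hy. apply conn_diag_absent.
      destruct (T (Conn x y)) eqn:E; auto. crossing_absurd NC (Conn x y) (Conn r s). }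
  rewrite (countb_ext (conn_diag T p q r s x) (conn_diag T p q r s2 x)); [lia|].
  intros y _. apply conn_diag_same_edges; auto.
  rewrite !(eqb_neq_false x r) by lia. auto.
Qed.

Lemma fan_lower_L_after y : s < y -> quiddity T p q r s (L y) = quiddity T p q r s2 (L y).
Proof.
  intros Hy. rewrite !quiddity_L, (zrange_app s2 (s - 1) q), countb_app by lia.
  replace (s - 1 + 1) with s by lia.
  rewrite (countb_none _ (zrange s2 (s - 1))).
  2:{ intros u Hu. apply In_zrange in Hu. apply linked_none; intros; [lia|].
      unfold lower_arcs. destruct (T (Low u y)) eqn:E; auto.
      crossing_absurd NC (Low u y) (Conn r s). }
  rewrite (countb_ext (fun x => conn_diag T p q r s x y) (fun x => conn_diag T p q r s2 x y)); [lia|].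
  intros x _. apply conn_diag_same_edges; auto.
  rewrite (eqb_neq_false y s), (eqb_neq_false y s2) by lia. rewrite !andb_false_r. auto.
Qed.

Lemma conn_diag_old_edge_lower : conn_diag T p q r s2 r s = true.
Proof.
  unfold conn_diag. rewrite Hrs, (eqb_neq_false r p), (eqb_neq_false s s2) by lia.
  rewrite !andb_false_r. auto.
Qed.

Lemma fan_lower_U_pivot : quiddity T p q r s2 (U r) = quiddity T p q r s (U r) + 1.
Proof.
  rewrite !quiddity_U, (zrange_app s2 (s - 1) q), countb_app by lia.
  replace (s - 1 + 1) with s by lia.
  rewrite (countb_none _ (zrange s2 (s - 1))).
  2:{ intros y Hy. apply In_zrange in Hy. destruct (Z.eq_dec y s2) as [->|].
      - apply conn_diag_edge.
      - apply conn_diag_absent, no_conn_between. lia. }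
  rewrite (zrange_cons s q), !countb_cons, conn_diag_edge, conn_diag_old_edge_lower by lia.
  rewrite (countb_ext (conn_diag T p q r s r) (conn_diag T p q r s2 r) (zrange (s + 1) q)); [lia|].
  intros y Hy. apply In_zrange in Hy. apply conn_diag_same_edges; auto.
  rewrite (eqb_neq_false y s), (eqb_neq_false y s2) by lia. rewrite !andb_false_r. auto.
Qed.

Lemma fan_lower_L_pivot :
  quiddity T p q r s2 (L s) = quiddity T p q r s (L s) + 1 + deg_in (lower_arcs T) s2 s s.
Proof.
  rewrite !quiddity_L. unfold deg_in.
  rewrite (zrange_app s2 (s - 1) q), (zrange_snoc s2 s), (zrange_snoc p r), !countb_app by lia.
  replace (s - 1 + 1) with s by lia.
  rewrite (countb_ext (fun x => conn_diag T p q r s x s) (fun x => conn_diag T p q r s2 x s)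
             (zrange p (r - 1))).
  2:{ intros x Hx. apply In_zrange in Hx. apply conn_diag_same_edges; auto.
      rewrite (eqb_neq_false x r) by lia. auto. }
  rewrite !countb_cons, conn_diag_edge, conn_diag_old_edge_lower, (linked_near _ s s), !countb_nil
    by lia.
  lia.
Qed.

Lemma fan_lower_L_new w : s2 <= w < s ->
  quiddity T p q r s2 (L w) = 1 + deg_in (lower_arcs T) s2 s w.
Proof.
  intros Hw. rewrite quiddity_L. unfold deg_in.
  rewrite (zrange_app s2 s q), countb_app by lia.
  rewrite (countb_none _ (zrange (s + 1) q)).
  2:{ intros u Hu. apply In_zrange in Hu. apply linked_none; intros; [|lia].
      unfold lower_arcs. destruct (T (Low w u)) eqn:E; auto.
      crossing_absurd NC (Low w u) (Conn r s). }
  rewrite (countb_none _ (zrange p r)); [lia|].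
  intros x Hx. apply In_zrange in Hx. destruct (Z.eq_dec x r) as [->|].
  - destruct (Z.eq_dec w s2) as [->|]; [apply conn_diag_edge|].
    apply conn_diag_absent, no_conn_between. lia.
  - apply conn_diag_absent. destruct (T (Conn x w)) eqn:E; auto.
    crossing_absurd NC (Conn x w) (Conn r s).
Qed.

Lemma frieze_val_fan_lower i a :
  saturated (lower_arcs T) s2 s -> p < i < r -> s < a < q ->
  frieze_val T p q r s i a = frieze_val T p q r s2 i a.
Proof.
  intros HS Hi Ha. unfold frieze_val, frieze_path.
  rewrite (zrange_snoc (i + 1) r), (zrange_cons s a) by lia.
  rewrite (zrange_app s2 (s - 1) a) by lia. replace (s - 1 + 1) with s by lia.
  rewrite (zrange_cons s2 (s - 1)), (zrange_cons s a) by lia.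
  repeat (rewrite !map_app; cbn [map]). rewrite !map_map.
  rewrite (map_ext_in (fun x => quiddity T p q r s2 (U x)) (fun x => quiddity T p q r s (U x))
             (zrange (i + 1) (r - 1))).
  2:{ intros x Hx. apply In_zrange in Hx. symmetry. apply fan_lower_U_before. lia. }
  rewrite (map_ext_in (fun y => quiddity T p q r s2 (L y)) (fun y => quiddity T p q r s (L y))
             (zrange (s + 1) a)).
  2:{ intros y Hy. apply In_zrange in Hy. symmetry. apply fan_lower_L_after. lia. }
  rewrite (map_ext_in (fun y => quiddity T p q r s2 (L y)) (fun w => 1 + deg_in (lower_arcs T) s2 s w)
             (zrange (s2 + 1) (s - 1))).
  2:{ intros w Hw. apply In_zrange in Hw. apply fan_lower_L_new. lia. }
  rewrite fan_lower_U_pivot, fan_lower_L_pivot, (fan_lower_L_new s2) by lia.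
  set (before := map (fun x => quiddity T p q r s (U x)) (zrange (i + 1) (r - 1))).
  set (after := map (fun y => quiddity T p q r s (L y)) (zrange (s + 1) a)).
  transitivity (fst (steps (before ++ [quiddity T p q r s (U r); quiddity T p q r s (L s)]
                            ++ after) (0, 1))).
  { rewrite <- app_assoc. reflexivity. }
  rewrite (steps_middle before after _ _ _
             (fun st => eq_sym (glue_polygon_left _ lower_noncrossing s2 s Hlt HS _ _ st))).
  rewrite <- !app_assoc. cbn [app]. repeat rewrite <- app_assoc. reflexivity.
Qed.

End FanLower.

Hypothesis VA : arcs_valid T.
Hypothesis MX : arcs_maximal T.

Lemma saturated_upper_fan r s r2 :
  T (Conn r s) = true -> T (Conn r2 s) = true -> r < r2 ->
  (forall x y, r < x < r2 -> T (Conn x y) = false) -> saturated (upper_arcs T) r r2.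
Proof.
  intros H1 H2 Hlt NoC a b Ha Hb Hab Eab. unfold upper_arcs in Eab.
  destruct (MX (Up a b)) as [z [Tz Cz]]; [simpl; lia|auto|].
  destruct z as [x y|c d|c d]; simpl in Cz.
  - rewrite NoC in Tz by lia. discriminate.
  - pose proof (VA _ Tz) as Vz. simpl in Vz.
    exists c, d. unfold upper_arcs. repeat split; auto; try lia.
    + destruct (Z_le_gt_dec r c); auto. crossing_absurd NC (Up c d) (Conn r s).
    + destruct (Z_le_gt_dec d r2); auto. crossing_absurd NC (Up c d) (Conn r2 s).
  - contradiction.
Qed.

Lemma saturated_lower_fan r s s2 :
  T (Conn r s) = true -> T (Conn r s2) = true -> s2 < s ->
  (forall x y, s2 < y < s -> T (Conn x y) = false) -> saturated (lower_arcs T) s2 s.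
Proof.
  intros H1 H2 Hlt NoC a b Ha Hb Hab Eab. unfold lower_arcs in Eab.
  destruct (MX (Low a b)) as [z [Tz Cz]]; [simpl; lia|auto|].
  destruct z as [x y|c d|c d]; simpl in Cz.
  - rewrite NoC in Tz by lia. discriminate.
  - contradiction.
  - pose proof (VA _ Tz) as Vz. simpl in Vz.
    exists c, d. unfold lower_arcs. repeat split; auto; try lia.
    + destruct (Z_le_gt_dec s2 c); auto. crossing_absurd NC (Low c d) (Conn r s2).
    + destruct (Z_le_gt_dec d s); auto. crossing_absurd NC (Low c d) (Conn r s).
Qed.

(* Well-ordering of nat, for a closest arc (the property need not be decidable). *)
Lemma least_nat (P : nat -> Prop) n : P n -> exists m, P m /\ forall k, (k < m)%nat -> ~ P k.
Proof.
  induction n as [n IH] using (well_founded_induction lt_wf). intros Hn.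
  destruct (classic (exists k, (k < n)%nat /\ P k)) as [[k [Hk Pk]]|H].
  - apply (IH k Hk Pk).
  - exists n. split; auto. intros k Hk Pk. apply H. eauto.
Qed.

Lemma next_conn_arc r s r' s' :
  T (Conn r s) = true -> T (Conn r' s') = true -> r <= r' -> s' <= s -> (r <> r' \/ s <> s') ->
  (exists r2, r < r2 <= r' /\ T (Conn r2 s) = true /\
     forall x y, r < x < r2 -> T (Conn x y) = false) \/
  (exists s2, s' <= s2 < s /\ T (Conn r s2) = true /\
     forall x y, s2 < y < s -> T (Conn x y) = false).
Proof.
  intros H1 H2 Hr Hs Hne.
  set (P := fun n => exists x y, T (Conn x y) = true /\ r <= x <= r' /\ s' <= y <= s /\
            (r <> x \/ s <> y) /\ Z.to_nat ((x - r) + (s - y)) = n).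
  destruct (least_nat P (Z.to_nat ((r' - r) + (s - s'))))
    as [m [[x [y [Txy [Hx [Hy [Hn Hm]]]]]] Mn]].
  { exists r', s'. repeat split; auto; lia. }
  assert (closest : forall x' y', T (Conn x' y') = true -> r <= x' <= r' -> s' <= y' <= s ->
            (r <> x' \/ s <> y') -> (x' - r) + (s - y') < (x - r) + (s - y) -> False).
  { intros x' y' T' H3 H4 H5 H6. apply (Mn (Z.to_nat ((x' - r) + (s - y')))); [lia|].
    exists x', y'. repeat split; try lia; auto. }
  destruct (Z.eq_dec y s) as [->|Ey]; [|destruct (Z.eq_dec x r) as [->|Ex]].
  - left. exists x. repeat split; auto; try lia.
    intros u v Hu. destruct (T (Conn u v)) eqn:Tuv; auto. exfalso.
    pose proof (conn_monotone u v r s Tuv H1). pose proof (conn_monotone u v x s Tuv Txy).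
    assert (v = s) by nia. subst v. apply (closest u s); auto; lia.
  - right. exists y. repeat split; auto; try lia.
    intros u v Hv. destruct (T (Conn u v)) eqn:Tuv; auto. exfalso.
    pose proof (conn_monotone u v r s Tuv H1). pose proof (conn_monotone u v r y Tuv Txy).
    assert (u = r) by nia. subst u. apply (closest r v); auto; lia.
  - (* otherwise (r, y) is not an arc, and an arc crossing it would be closer *)
    exfalso. destruct (T (Conn r y)) eqn:Try; [apply (closest r y); auto; lia|].
    destruct (MX (Conn r y)) as [z [Tz Cz]]; [simpl; auto|auto|].
    destruct z as [x' y'|c d|c d]; simpl in Cz.
    + pose proof (conn_monotone x' y' r s Tz H1). pose proof (conn_monotone x' y' x y Tz Txy).
      assert (x' < r /\ y' < y \/ r < x' /\ y < y') as [Cz'|Cz'] by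
        (destruct (Z.lt_trichotomy x' r) as [|[|]]; destruct (Z.lt_trichotomy y' y) as [|[|]];
         subst; nia).
      * nia.
      * apply (closest x' y'); auto; nia.
    + crossing_absurd NC (Up c d) (Conn r s).
    + crossing_absurd NC (Low c d) (Conn x y).
Qed.

(* Replacing the near edge (r, s) of P by a nested arc (r', s') of T does not
   change frieze values: walk from (r, s) to (r', s') by fan moves. *)
Lemma frieze_val_near_edge p q r s r' s' i a :
  T (Conn p q) = true -> T (Conn r s) = true -> T (Conn r' s') = true ->
  r <= r' -> s' <= s -> p < i < r -> s < a < q ->
  frieze_val T p q r s i a = frieze_val T p q r' s' i a.
Proof.
  remember (Z.to_nat ((r' - r) + (s - s'))) as n eqn:Hn. revert r s Hn.
  induction n as [n IH] using (well_founded_induction lt_wf).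
  intros r s Hn Hpq Hrs Hr's' Hr Hs Hi Ha.
  destruct (classic (r = r' /\ s = s')) as [[-> ->]|Hne]; [reflexivity|].
  destruct (next_conn_arc r s r' s') as [[r2 [H1 [H2 H3]]]|[s2 [H1 [H2 H3]]]]; auto.
  { destruct (Z.eq_dec r r'); auto. }
  - rewrite (frieze_val_fan_upper p q r s r2 Hrs ltac:(lia) H3 ltac:(lia) ltac:(lia) i a)
      by (try apply (saturated_upper_fan r s r2); auto; lia).
    apply (IH (Z.to_nat ((r' - r2) + (s - s')))); auto; lia.
  - rewrite (frieze_val_fan_lower p q r s s2 Hrs ltac:(lia) H3 ltac:(lia) ltac:(lia) i a)
      by (try apply (saturated_lower_fan r s s2); auto; lia).
    apply (IH (Z.to_nat ((r' - r) + (s2 - s')))); auto; lia.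
Qed.

Lemma frieze_val_independent i a p1 q1 r1 s1 p2 q2 r2 s2 :
  Phi_choice T i a (p1, q1, r1, s1) -> Phi_choice T i a (p2, q2, r2, s2) ->
  frieze_val T p1 q1 r1 s1 i a = frieze_val T p2 q2 r2 s2 i a.
Proof.
  intros [A1 [B1 [C1 D1]]] [A2 [B2 [C2 D2]]].
  transitivity (frieze_val T p1 q1 r2 s2 i a).
  - destruct (conn_nested r1 s1 r2 s2 B1 B2) as [[E1 E2]|[E1 E2]].
    + apply frieze_val_near_edge; auto; lia.
    + symmetry. apply frieze_val_near_edge; auto; lia.
  - destruct (conn_nested p1 q1 p2 q2 A1 A2) as [[E1 E2]|[E1 E2]].
    + symmetry. apply frieze_val_far_edge; auto; lia.
    + apply frieze_val_far_edge; auto; lia.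
Qed.

End Triangulation.

(* [Phi] evaluates [friese] on an epsilon-chosen admissible polygon; by
   independence it agrees with the frieze value of any admissible polygon. *)
Lemma Phi_frieze_val T i a p q r s : triangulation T ->
  Phi_choice T i a (p, q, r, s) -> Phi T i a = frieze_val T p q r s i a.
Proof.
  intros [VA [NC [MX EX]]] Hc. unfold Phi.
  assert (Hex : exists c, Phi_choice T i a c).
  { destruct (EX i a) as [p0 [q0 [p1 [q1 [H1 [H2 [H3 [H4 [H5 H6]]]]]]]]].
    exists (p0, q0, p1, q1). unfold Phi_choice. repeat split; auto; lia. }
  pose proof (epsilon_spec (inhabits (0, 0, 0, 0)) (Phi_choice T i a) Hex) as Hs.
  destruct (epsilon (inhabits (0, 0, 0, 0)) (Phi_choice T i a)) as [[[p0 q0] r0] s0].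
  pose proof Hs as [A [B [C D]]].
  rewrite friese_frieze_val by lia. apply frieze_val_independent; auto.
Qed.

Definition arc_of (v w : vtx) : arc := match mk_arc v w with Some x => x | None => Conn 0 0 end.

Definition arcs_at (T : arc -> bool) (p q r s j : Z) : list arc :=
  map (arc_of (U j)) (filter (is_diag T p q r s (U j)) (poly_vertices p q r s)).

Lemma NoDup_poly_vertices p q r s : NoDup (poly_vertices p q r s).
Proof.
  unfold poly_vertices. apply NoDup_app.
  - apply NoDup_map_NoDup_ForallPairs; [intros x y _ _ H; inversion H; auto|apply NoDup_zrange].
  - apply NoDup_map_NoDup_ForallPairs; [intros x y _ _ H; inversion H; auto|apply NoDup_zrange].
  - intros v H1 H2. apply in_map_iff in H1 as [x [<- _]], H2 as [y [E _]]. discriminate.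
Qed.

Lemma is_diag_U_cases T p q r s j w : is_diag T p q r s (U j) w = true ->
  (exists u, w = U u /\ j + 2 <= u /\ arc_of (U j) w = Up j u /\ T (Up j u) = true) \/
  (exists u, w = U u /\ u + 2 <= j /\ arc_of (U j) w = Up u j /\ T (Up u j) = true) \/
  (exists y, w = L y /\ arc_of (U j) w = Conn j y /\ conn_diag T p q r s j y = true).
Proof.
  intros H. destruct w as [u|y].
  - rewrite is_diag_UU in H. unfold linked, upper_arcs in H. unfold arc_of, mk_arc.
    destruct (Z.leb_spec (j + 2) u); [left; exists u; auto|].
    destruct (Z.leb_spec (u + 2) j); [right; left; exists u; auto|discriminate].
  - rewrite is_diag_UL in H. right; right. exists y. auto.
Qed.

Lemma arcs_at_NoDup T p q r s j : NoDup (arcs_at T p q r s j).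
Proof.
  unfold arcs_at. apply NoDup_map_NoDup_ForallPairs.
  2:{ apply NoDup_filter, NoDup_poly_vertices. }
  intros w1 w2 H1 H2 E. apply filter_In in H1 as [_ H1], H2 as [_ H2].
  apply is_diag_U_cases in H1, H2.
  destruct H1 as [[u1 [-> [? [A1 _]]]]|[[u1 [-> [? [A1 _]]]]|[y1 [-> [A1 _]]]]];
  destruct H2 as [[u2 [-> [? [A2 _]]]]|[[u2 [-> [? [A2 _]]]]|[y2 [-> [A2 _]]]]];
  rewrite A1, A2 in E; inversion E; subst; auto; lia.
Qed.

(* Every arc at j^o is a diagonal of P, since it cannot cross the edges of P. *)
Lemma arcs_at_spec T p q r s j : arcs_valid T -> arcs_noncrossing T ->
  T (Conn p q) = true -> T (Conn r s) = true -> p < j < r -> s <= q ->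
  forall x, In x (arcs_at T p q r s j) <-> (T x = true /\ has_endpoint (U j) x).
Proof.
  intros VA NC Hpq Hrs Hj Hsq x. unfold arcs_at. split.
  - intros H. apply in_map_iff in H as [w [<- Hw]].
    apply filter_In in Hw as [_ Hw]. apply is_diag_U_cases in Hw.
    destruct Hw as [[u [-> [_ [A B]]]]|[[u [-> [_ [A B]]]]|[y [-> [A B]]]]];
      rewrite A; simpl; split; auto.
    unfold conn_diag in B. apply andb_true_iff in B as [B _]. apply andb_true_iff in B. tauto.
  - intros [Tx Hx]. pose proof (VA x Tx) as Vx. rewrite in_map_iff.
    destruct x as [a b|a b|a b]; simpl in Hx, Vx.
    + destruct Hx as [Hx|Hx]; [|discriminate]. injection Hx as Ha; subst a.
      exists (L b). split; [reflexivity|]. apply filter_In. split.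
      * unfold poly_vertices. apply in_or_app. right. apply in_map, In_zrange. split.
        { destruct (Z_le_gt_dec s b); auto. crossing_absurd NC (Conn j b) (Conn r s). }
        { destruct (Z_le_gt_dec b q); auto. crossing_absurd NC (Conn j b) (Conn p q). }
      * rewrite is_diag_UL. unfold conn_diag.
        rewrite Tx, (eqb_neq_false j p), (eqb_neq_false j r) by lia. auto.
    + destruct Hx as [Hx|Hx]; injection Hx as Hx; [subst a|subst b].
      * exists (U b). split.
        { unfold arc_of, mk_arc. destruct (Z.leb_spec (j + 2) b); auto; lia. }
        apply filter_In. split.
        { unfold poly_vertices. apply in_or_app. left. apply in_map, In_zrange. split; [lia|].
          destruct (Z_le_gt_dec b r); auto. crossing_absurd NC (Up j b) (Conn r s). }
        rewrite is_diag_UU, linked_up by lia. auto.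
      * exists (U a). split.
        { unfold arc_of, mk_arc. destruct (Z.leb_spec (j + 2) a); [lia|].
          destruct (Z.leb_spec (a + 2) j); auto; lia. }
        apply filter_In. split.
        { unfold poly_vertices. apply in_or_app. left. apply in_map, In_zrange. split; [|lia].
          destruct (Z_le_gt_dec p a); auto. crossing_absurd NC (Up a j) (Conn p q). }
        rewrite is_diag_UU, linked_down by lia. auto.
    + destruct Hx as [Hx|Hx]; discriminate.
Qed.

Lemma quiddity_degree T p q r s j (l : list arc) : arcs_valid T -> arcs_noncrossing T ->
  T (Conn p q) = true -> T (Conn r s) = true -> p < j < r -> s <= q ->
  NoDup l -> (forall x, In x l <-> (T x = true /\ has_endpoint (U j) x)) ->
  quiddity T p q r s (U j) = 1 + Z.of_nat (length l).
Proof.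
  intros VA NC Hpq Hrs Hj Hsq Hl Hspec. unfold quiddity. do 2 f_equal.
  change (countb (is_diag T p q r s (U j)) (poly_vertices p q r s))
    with (length (filter (is_diag T p q r s (U j)) (poly_vertices p q r s))).
  rewrite <- (length_map (arc_of (U j))). fold (arcs_at T p q r s j).
  apply Nat.le_antisymm; apply NoDup_incl_length; auto using arcs_at_NoDup; intros x Hx.
  - apply Hspec, (arcs_at_spec T p q r s j); auto.
  - apply (arcs_at_spec T p q r s j); auto. apply Hspec; auto.
Qed.

Lemma frieze_val_three_term T p q r s j b : j + 1 < r ->
  frieze_val T p q r s (j - 1) b + frieze_val T p q r s (j + 1) b
  = quiddity T p q r s (U j) * frieze_val T p q r s j b.
Proof.
  intros. unfold frieze_val, frieze_path.
  replace (j - 1 + 1) with j by lia.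
  rewrite (zrange_cons j r), (zrange_cons (j + 1) r) by lia. cbn [map app].
  apply steps_three_term.
Qed.

Lemma frieze_val_wronskian T p q r s j b : j + 1 < r -> s <= b ->
  frieze_val T p q r s (j - 1) b * frieze_val T p q r s j (b + 1)
  - frieze_val T p q r s (j - 1) (b + 1) * frieze_val T p q r s j b = 1.
Proof.
  intros. unfold frieze_val, frieze_path.
  rewrite !(zrange_snoc s (b + 1)) by lia. replace (b + 1 - 1) with b by lia.
  rewrite (zrange_cons (j - 1 + 1) r) by lia. replace (j - 1 + 1) with j by lia.
  rewrite !map_app, !app_assoc. cbn [map app]. apply steps_wronskian.
Qed.

Lemma wronskian_coefficient g x1 x2 y1 y2 z1 z2 :
  x1 + z1 = g * y1 -> x2 + z2 = g * y2 -> x1 * y2 - x2 * y1 = 1 ->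
  g = x1 * z2 - x2 * z1.
Proof.
  intros H1 H2 W.
  replace z1 with (g * y1 - x1) by lia. replace z2 with (g * y2 - x2) by lia.
  transitivity (g * (x1 * y2 - x2 * y1)); [rewrite W|]; ring.
Qed.

Lemma frieze_window T j a : triangulation T -> exists p q r s,
  T (Conn p q) = true /\ T (Conn r s) = true /\ p < j - 1 /\ j + 1 < r /\ s < a /\ a + 1 < q /\
  forall i b, j - 1 <= i <= j + 1 -> a <= b <= a + 1 -> Phi T i b = frieze_val T p q r s i b.
Proof.
  intros HT. pose proof HT as [_ [_ [_ EX]]].
  destruct (EX (j - 1) (a + 1)) as [p [q [_ [_ [A [_ [C [D _]]]]]]]].
  destruct (EX (j + 1) a) as [_ [_ [r [s [_ [B [_ [_ [E F]]]]]]]]].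
  exists p, q, r, s. repeat split; auto; try lia.
  intros i b Hi Hb. apply Phi_frieze_val; auto. repeat split; auto; lia.
Qed.

Theorem mainTheorem13 (T : arc -> bool) (HT : triangulation T) (j : Z) :
  exists l : list arc,
    NoDup l /\
    (forall x, In x l <-> (T x = true /\ has_endpoint (U j) x)) /\
    let gamma := 1 + Z.of_nat (length l) in
    (forall a : Z, Phi T (j - 1) a + Phi T (j + 1) a = gamma * Phi T j a) /\
    (forall a : Z,
       gamma = Phi T (j - 1) a * Phi T (j + 1) (a + 1)
               - Phi T (j - 1) (a + 1) * Phi T (j + 1) a).
Proof.
  pose proof HT as [VA [NC [_ EX]]].
  destruct (EX j 0) as [p0 [q0 [r0 [s0 [A0 [B0 [C0 [D0 [E0 F0]]]]]]]]].
  assert (Hl : forall x, In x (arcs_at T p0 q0 r0 s0 j) <-> (T x = true /\ has_endpoint (U j) x))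
    by (apply arcs_at_spec; auto; lia).
  exists (arcs_at T p0 q0 r0 s0 j). split; [apply arcs_at_NoDup|]. split; [exact Hl|].
  intros gamma.
  assert (window : forall a, exists p q r s, quiddity T p q r s (U j) = gamma /\ j + 1 < r /\
            s <= a /\ forall i b, j - 1 <= i <= j + 1 -> a <= b <= a + 1 ->
            Phi T i b = frieze_val T p q r s i b).
  { intros a. destruct (frieze_window T j a HT) as [p [q [r [s [Hpq [Hrs [? [? [? [? HPhi]]]]]]]]]].
    exists p, q, r, s. repeat split; auto; try lia.
    apply quiddity_degree; auto using arcs_at_NoDup; lia. }
  split; intros a; destruct (window a) as [p [q [r [s [Hg [Hr [Hs HPhi]]]]]]];
    rewrite !HPhi by lia; rewrite <- Hg.
  - apply frieze_val_three_term. lia.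
  - apply wronskian_coefficient with (frieze_val T p q r s j a) (frieze_val T p q r s j (a + 1)).
    + apply frieze_val_three_term. lia.
    + apply frieze_val_three_term. lia.
    + apply frieze_val_wronskian; lia.
Qed.
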